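(* Let $\Gamma$ be a regular social purpose game. Then for every Nash equilibrium $x^{NE}$ and every social optimum $x^{SO}$ of $\Gamma$, $$\sum_{i=1}^n x^{NE}_i\le\sum_{i=1}^n x^{SO}_i.$$
   Context: A social purpose game $\Gamma=\langle N,\overline{Q},H,(\alpha_i,h_i,g_i)_{i\in N}\rangle$ consists of a player set $N=\{1,\dots,n\}$ with $n\ge 2$, a number $\overline{Q}>0$ such that every player's strategy set is $S_i=[0,\overline{Q}]$, a function $H\colon\mathbb{R}\to\mathbb{R}$, and for each $i\in N$ a weight $\alpha_i>0$ and functions $h_i,g_i\colon[0,\overline{Q}]\to\mathbb{R}$. The payoff of player $i$ at $x\in[0,\overline{Q}]^N$ is $\pi_i(x)=\alpha_i H\big(\sum_{j=1}^n h_j(x_j)\big)-g_i(x_i)$. A Nash equilibrium is a profile $x^*$ with $\pi_i(x^* )\ge\pi_i(y_i,x^*_{-i})$ for all $i$ and all $y_i$; a social optimum is a maximizer of $\sum_{i\in N}\pi_i$ over $[0,\overline{Q}]^N$. $\Gamma$ is regular if: each $h_i$ is the identity $h_i(x_i)=x_i$; $H$ is continuously differentiable, increasing and concave; and each $g_i$ is continuously differentiable, increasing and convex. *)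

From Stdlib Require Import Reals.
From Coquelicot Require Import Coquelicot.
Open Scope R_scope.

(* Players are indexed 0..n-1 (paper: 1..n). Profiles x : nat -> R,
   only the values x i with i < n matter. *)

Definition total (n : nat) (x : nat -> R) : R := sum_f_R0 x (pred n).
(* sum_f_R0 x (n-1) = x 0 + ... + x (n-1) for n >= 1 *)

Definition in_box (Qbar : R) (n : nat) (x : nat -> R) : Prop :=
  forall i, (i < n)%nat -> 0 <= x i <= Qbar.

Definition payoff (n : nat) (H : R -> R) (alpha : nat -> R)
  (h g : nat -> R -> R) (x : nat -> R) (i : nat) : R :=
  alpha i * H (sum_f_R0 (fun j => h j (x j)) (pred n)) - g i (x i).

Definition upd (x : nat -> R) (i : nat) (y : R) : nat -> R :=
  fun j => if Nat.eqb j i then y else x j.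

Definition is_NE (n : nat) (Qbar : R) (H : R -> R) (alpha : nat -> R)
  (h g : nat -> R -> R) (x : nat -> R) : Prop :=
  in_box Qbar n x /\
  forall i, (i < n)%nat -> forall y, 0 <= y <= Qbar ->
    payoff n H alpha h g x i >= payoff n H alpha h g (upd x i y) i.

Definition welfare (n : nat) (H : R -> R) (alpha : nat -> R)
  (h g : nat -> R -> R) (x : nat -> R) : R :=
  sum_f_R0 (payoff n H alpha h g x) (pred n).

Definition is_SO (n : nat) (Qbar : R) (H : R -> R) (alpha : nat -> R)
  (h g : nat -> R -> R) (x : nat -> R) : Prop :=
  in_box Qbar n x /\
  forall y, in_box Qbar n y ->
    welfare n H alpha h g x >= welfare n H alpha h g y.

Definition C1 (f : R -> R) : Prop :=
  (forall x, ex_derive f x) /\ (forall x, continuous (Derive f) x).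

Definition C1_on (a b : R) (f : R -> R) : Prop :=
  (forall x, a <= x <= b -> ex_derive f x) /\
  (forall x, a <= x <= b ->
     filterlim (Derive f) (within (fun y => a <= y <= b) (locally x))
       (locally (Derive f x))).

Definition increasing_on (a b : R) (f : R -> R) : Prop :=
  forall x y, a <= x <= b -> a <= y <= b -> x < y -> f x < f y.

Definition increasing (f : R -> R) : Prop := forall x y, x < y -> f x < f y.

Definition concave (f : R -> R) : Prop :=
  forall x y t, 0 <= t <= 1 -> t * f x + (1 - t) * f y <= f (t * x + (1 - t) * y).

Definition convex_on (a b : R) (f : R -> R) : Prop :=
  forall x y t, a <= x <= b -> a <= y <= b -> 0 <= t <= 1 ->
    f (t * x + (1 - t) * y) <= t * f x + (1 - t) * f y.

Definition regular (n : nat) (Qbar : R) (H : R -> R) (alpha : nat -> R)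
  (h g : nat -> R -> R) : Prop :=
  (2 <= n)%nat /\ 0 < Qbar /\
  (forall i, (i < n)%nat -> 0 < alpha i) /\
  (forall i, (i < n)%nat -> forall t, 0 <= t <= Qbar -> h i t = t) /\
  C1 H /\ increasing H /\ concave H /\
  (forall i, (i < n)%nat ->
     C1_on 0 Qbar (g i) /\ increasing_on 0 Qbar (g i) /\ convex_on 0 Qbar (g i)).

(* Suppose Z = total xNE > X = total xSO.  Some
   player i then has b = xNE i > a = xSO i; let t = min (b - a) (Z - X) > 0.
   - Nash: player i cannot gain by lowering b to b - t, so
       g i b - g i (b - t) <= alpha i (H Z - H (Z - t)).
   - Optimum: raising a to a + t does not raise welfare, so with
       A = sum_j alpha j,   A (H (X + t) - H X) <= g i (a + t) - g i a.
   - Increments of a convex function grow and those of a concave function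
     shrink with the base point; as a <= b - t and X <= Z - t this chains to
       A (H (X+t) - H X) <= alpha i (H (X+t) - H X),
     impossible since H (X+t) > H X and A > alpha i (n >= 2, alpha > 0). *)

From Stdlib Require Import Reals Lra Lia Classical.
From Coquelicot Require Import Coquelicot.
Open Scope R_scope.

Lemma convex_increment_mono (lo hi : R) (f : R -> R) (a c t : R) :
  convex_on lo hi f -> lo <= a -> a <= c -> 0 <= t -> c + t <= hi ->
  f (a + t) - f a <= f (c + t) - f c.
Proof.
  intros Hconv Hlo Hac Ht Hhi.
  destruct (Req_dec a c) as [->|Hne]; [lra|].
  set (l := (c - a) / (c + t - a)).
  assert (Hl : 0 <= l <= 1).
  { unfold l; split.
    - apply Rdiv_le_0_compat; lra.
    - apply Rmult_le_reg_r with (c + t - a); [lra|].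
      unfold Rdiv; rewrite Rmult_assoc, Rinv_l; lra. }
  (* a + t and c are the two mirror-image convex combinations of a, c + t *)
  assert (Eat : a + t = l * a + (1 - l) * (c + t)) by (unfold l; field; lra).
  assert (Ec : c = (1 - l) * a + (1 - (1 - l)) * (c + t)) by (unfold l; field; lra).
  pose proof (Hconv a (c + t) l ltac:(lra) ltac:(lra) Hl) as H1.
  pose proof (Hconv a (c + t) (1 - l) ltac:(lra) ltac:(lra) ltac:(lra)) as H2.
  rewrite <- Eat in H1; rewrite <- Ec in H2; lra.
Qed.

Lemma concave_opp_convex (lo hi : R) (f : R -> R) :
  concave f -> convex_on lo hi (fun x => - f x).
Proof. intros Hconc x y t _ _ Ht; pose proof (Hconc x y t Ht); lra. Qed.

Lemma concave_increment_antimono (f : R -> R) (a c t : R) :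
  concave f -> a <= c -> 0 <= t -> f (c + t) - f c <= f (a + t) - f a.
Proof.
  intros Hconc Hac Ht.
  pose proof (convex_increment_mono a (c + t) (fun x => - f x) a c t
                (concave_opp_convex a (c + t) f Hconc)
                ltac:(lra) Hac Ht ltac:(lra)).
  lra.
Qed.

Lemma sum_upd (F : nat -> R -> R) (x : nat -> R) (i : nat) (y : R) (N : nat) :
  (i <= N)%nat ->
  sum_f_R0 (fun j => F j (upd x i y j)) N =
  sum_f_R0 (fun j => F j (x j)) N + (F i y - F i (x i)).
Proof.
  induction N as [|N IH]; intros Hi.
  - replace i with 0%nat by lia; simpl; unfold upd; simpl; lra.
  - simpl. destruct (Nat.eq_dec i (S N)) as [->|Hne].
    + rewrite (sum_eq (fun j => F j (upd x (S N) y j)) (fun j => F j (x j))).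
      * unfold upd; rewrite Nat.eqb_refl; lra.
      * intros j Hj; unfold upd; destruct (Nat.eqb_spec j (S N)); [lia|reflexivity].
    + rewrite IH by lia. unfold upd at 1.
      destruct (Nat.eqb_spec (S N) i); [lia|lra].
Qed.

Lemma term_lt_sum (f : nat -> R) (N i : nat) :
  (forall j, (j <= S N)%nat -> 0 < f j) -> (i <= S N)%nat ->
  f i < sum_f_R0 f (S N).
Proof.
  revert i; induction N as [|N IH]; intros i Hpos Hi.
  - pose proof (Hpos 0%nat ltac:(lia)); pose proof (Hpos 1%nat ltac:(lia)).
    simpl; destruct i as [|[|i]]; lia || lra.
  - rewrite tech5.
    assert (Hrest : forall k, (k <= S N)%nat -> f k < sum_f_R0 f (S N))
      by (intros k Hk; apply IH; [intros; apply Hpos; lia | exact Hk]).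
    pose proof (Hpos (S (S N)) ltac:(lia)).
    pose proof (Hpos 0%nat ltac:(lia)); pose proof (Hrest 0%nat ltac:(lia)).
    destruct (Nat.eq_dec i (S (S N))) as [->|Hne]; [lra|].
    pose proof (Hrest i ltac:(lia)); lra.
Qed.

Lemma sum_lt_exists_term (f g : nat -> R) (N : nat) :
  sum_f_R0 g N < sum_f_R0 f N -> exists i, (i <= N)%nat /\ g i < f i.
Proof.
  intros Hlt. apply NNPP; intros Hnone.
  assert (Hle : sum_f_R0 f N <= sum_f_R0 g N).
  { apply sum_Rle; intros j Hj. apply Rnot_lt_le; intros Hgt.
    apply Hnone; exists j; split; assumption. }
  lra.
Qed.

Lemma in_box_upd (Q : R) (n : nat) (x : nat -> R) (i : nat) (y : R) :
  in_box Q n x -> 0 <= y <= Q -> in_box Q n (upd x i y).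
Proof. intros Hb Hy j Hj; unfold upd; destruct (Nat.eqb j i); auto. Qed.

Lemma total_upd (n : nat) (x : nat -> R) (i : nat) (y : R) :
  (i < n)%nat -> total n (upd x i y) = total n x + (y - x i).
Proof.
  intros Hi; unfold total.
  exact (sum_upd (fun _ r => r) x i y (pred n) ltac:(lia)).
Qed.

Section Deviations.

Variables (n : nat) (Q : R) (H : R -> R) (alpha : nat -> R) (h g : nat -> R -> R).
Hypothesis n_pos : (0 < n)%nat.
Hypothesis h_id : forall i, (i < n)%nat -> forall t, 0 <= t <= Q -> h i t = t.

Lemma aggregate_total (x : nat -> R) :
  in_box Q n x -> sum_f_R0 (fun j => h j (x j)) (pred n) = total n x.
Proof.
  intros Hb; unfold total; apply sum_eq; intros j Hj.
  apply h_id; [| apply Hb]; lia.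
Qed.

Lemma welfare_total (x : nat -> R) :
  in_box Q n x ->
  welfare n H alpha h g x =
  sum_f_R0 alpha (pred n) * H (total n x) - sum_f_R0 (fun j => g j (x j)) (pred n).
Proof.
  intros Hb; unfold welfare, payoff; rewrite aggregate_total by exact Hb.
  rewrite minus_sum, <- scal_sum, Rmult_comm; reflexivity.
Qed.

Lemma NE_deviation (x : nat -> R) (i : nat) (y : R) :
  is_NE n Q H alpha h g x -> (i < n)%nat -> 0 <= y <= Q ->
  g i (x i) - g i y <= alpha i * (H (total n x) - H (total n x + (y - x i))).
Proof.
  intros [Hb Hne] Hi Hy.
  pose proof (Hne i Hi y Hy) as Hdev; unfold payoff in Hdev.
  rewrite !aggregate_total, total_upd in Hdev by (auto using in_box_upd).
  unfold upd in Hdev; rewrite Nat.eqb_refl in Hdev; lra.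
Qed.

Lemma SO_deviation (x : nat -> R) (i : nat) (y : R) :
  is_SO n Q H alpha h g x -> (i < n)%nat -> 0 <= y <= Q ->
  sum_f_R0 alpha (pred n) * (H (total n x + (y - x i)) - H (total n x))
    <= g i y - g i (x i).
Proof.
  intros [Hb Hso] Hi Hy.
  pose proof (in_box_upd Q n x i y Hb Hy) as Hby.
  pose proof (Hso _ Hby) as Hopt.
  rewrite !welfare_total, total_upd in Hopt by assumption.
  rewrite (sum_upd g x i y (pred n) ltac:(lia)) in Hopt; lra.
Qed.

End Deviations.

Theorem proposition5 (n : nat) (Qbar : R) (H : R -> R) (alpha : nat -> R)
  (h g : nat -> R -> R) :
  regular n Qbar H alpha h g ->
  forall xNE xSO : nat -> R,
    is_NE n Qbar H alpha h g xNE ->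
    is_SO n Qbar H alpha h g xSO ->
    total n xNE <= total n xSO.
Proof.
  intros [Hn [_ [Hal [Hh [_ [Hinc [Hconc Hg]]]]]]] xNE xSO HNE HSO.
  apply Rnot_lt_le; intros Hgt.
  destruct (sum_lt_exists_term xNE xSO (pred n) Hgt) as [i [Hi Hab]].
  assert (Hin : (i < n)%nat) by lia.
  pose proof (proj1 HSO i Hin); pose proof (proj1 HNE i Hin).
  set (a := xSO i) in *; set (b := xNE i) in *.
  set (X := total n xSO) in *; set (Z := total n xNE) in *.
  set (t := Rmin (b - a) (Z - X)).
  assert (Ht : 0 < t) by (apply Rmin_glb_lt; lra).
  assert (Hta : t <= b - a) by apply Rmin_l.
  assert (HtZ : t <= Z - X) by apply Rmin_r.
  assert (Hne : g i b - g i (b - t) <= alpha i * (H Z - H (Z - t))).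
  { replace (Z - t) with (Z + (b - t - b)) by ring.
    exact (NE_deviation n Qbar H alpha h g ltac:(lia) Hh xNE i (b - t) HNE Hin ltac:(lra)). }
  assert (Hso : sum_f_R0 alpha (pred n) * (H (X + t) - H X) <= g i (a + t) - g i a).
  { replace (X + t) with (X + (a + t - a)) by ring.
    exact (SO_deviation n Qbar H alpha h g ltac:(lia) Hh xSO i (a + t) HSO Hin ltac:(lra)). }
  assert (Hcost : g i (a + t) - g i a <= g i b - g i (b - t)).
  { replace b with (b - t + t) at 1 by ring.
    apply (convex_increment_mono 0 Qbar); [apply (Hg i Hin) | lra ..]. }
  assert (Hgood : H Z - H (Z - t) <= H (X + t) - H X).
  { replace Z with (Z - t + t) at 1 by ring.
    apply concave_increment_antimono; [exact Hconc | lra ..]. }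
  assert (Hgain : 0 < H (X + t) - H X) by (apply Rlt_0_minus, Hinc; lra).
  assert (Hweights : alpha i < sum_f_R0 alpha (pred n)).
  { replace (pred n) with (S (n - 2)) by lia.
    apply term_lt_sum; [intros j Hj; apply Hal; lia | lia]. }
  assert (Hchain : sum_f_R0 alpha (pred n) * (H (X + t) - H X)
                   <= alpha i * (H (X + t) - H X)).
  { pose proof (Rmult_le_compat_l (alpha i) _ _ (Rlt_le _ _ (Hal i Hin)) Hgood); lra. }
  pose proof (Rmult_lt_compat_r _ _ _ Hgain Hweights); lra.
Qed.
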